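(* Assume that for every $(s,a)$ the probability weights of $\eta_{N,\infty}^{(s,a)}=\sum_{i=1}^N p_i^{(s,a)}(\theta)\delta_{z_i}$ are differentiable in $\theta$, and set $\nabla_\theta\eta_{N,\infty}^{(s,a)}:=\sum_i\nabla_\theta p_i^{(s,a)}(\theta)\delta_{z_i}$ (similarly for $\eta_{N,\infty}^s$). Define $g_{N}(s):=\sum_{a\in\mathcal A}\nabla_\theta\pi_\theta(a\mid s)\,\eta_{N,\infty}^{(s,a)}$. Let $\tau=(s_0,a_0,c_0,s_1,a_1,c_1,\dots)$ be a random trajectory with $s_0=s$, $a_t\sim\pi_\theta(\cdot\mid s_t)$, $c_t=C(s_t,a_t)$, $s_{t+1}\sim P(\cdot\mid s_t,a_t)$, and for $t\ge1$ set $$\tilde{\mathcal B}^{\tau}_t:=\Pi_{\mathcal C}(b_{c_0,\gamma})_\#\circ\Pi_{\mathcal C}(b_{c_1,\gamma})_\#\circ\cdots\circ\Pi_{\mathcal C}(b_{c_{t-1},\gamma})_\#.$$ Then $$\nabla_\theta\eta_{N,\infty}^{s}=\mathbb E_\tau\Big[g_N(s_0)+\sum_{t=1}^{|\tau|}\tilde{\mathcal B}^{\tau}_t\,g_N(s_t)\Big],$$ where $|\tau|$ is the length of the trajectory (the sum being over all $t\ge1$ for an infinite trajectory) and all operators act linearly on ($\mathbb R^d$-valued) signed measures supported on finitely many points.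
   Context: Finite MDP with states $\mathcal S$, actions $\mathcal A$, transition kernel $P$, deterministic costs $C(s,a)\in[c_{\min},c_{\max}]$, discount $\gamma\in[0,1)$, differentiable policies $\pi_\theta$, $\theta\in\mathbb R^d$. Grid: $N\ge2$, $z_i=z_{\min}+(i-1)\frac{z_{\max}-z_{\min}}{N-1}$. Projection $\Pi_{\mathcal C}$: $\Pi_{\mathcal C}\delta_y=\delta_{z_1}$ if $y\le z_1$, $=\delta_{z_N}$ if $y>z_N$, and $=\frac{z_{i+1}-y}{z_{i+1}-z_i}\delta_{z_i}+\frac{y-z_i}{z_{i+1}-z_i}\delta_{z_{i+1}}$ if $z_i<y\le z_{i+1}$, extended linearly to finite signed combinations of Diracs. $b_{c,\gamma}(z)=c+\gamma z$ and $(b_{c,\gamma})_\#\nu(A)=\nu(b_{c,\gamma}^{-1}(A))$. The projected distributional Bellman operator is $(\Pi_{\mathcal C}\mathcal T^\pi\eta)^{(s,a)}=\Pi_{\mathcal C}\big[\sum_{s'}P(s'\mid s,a)\sum_{a'}\pi(a'\mid s')(b_{C(s,a),\gamma})_\#\eta^{(s',a')}\big]$; $\eta_{N,\infty}$ is its unique fixed point among families of distributions on $\{z_1,\dots,z_N\}$, and $\eta_{N,\infty}^s:=\sum_a\pi_\theta(a\mid s)\eta_{N,\infty}^{(s,a)}$. *)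

From HB Require Import structures.
From mathcomp Require Import all_boot all_order all_algebra.
From mathcomp Require Import all_classical all_reals all_analysis.
Set Implicit Arguments. Unset Strict Implicit. Unset Printing Implicit Defensive.
Import Order.TTheory GRing.Theory Num.Theory.
Import numFieldNormedType.Exports.
Local Open Scope ring_scope.

Section Defs.
Variable R : realType.

(* Grid atoms, 0-indexed: zgrid i = z_{i+1} of the paper,
   z_{i+1} = zmin + i * (zmax - zmin)/(N-1). *)
Definition zgrid (N : nat) (zmin zmax : R) (i : nat) : R :=
  zmin + i%:R * ((zmax - zmin) / (N.-1)%:R).

(* Weight of atom j in Pi_C delta_y. *)
Definition projC (N : nat) (zmin zmax : R) (y : R) (j : 'I_N) : R :=
  let z := @zgrid N zmin zmax in
  if y <= z 0%N then ((j : nat) == 0%N)%:R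
  else if z N.-1 < y then ((j : nat) == N.-1)%:R
  else \sum_(i < N.-1)
        (if (z i < y) && (y <= z i.+1) then
           (if (j : nat) == i then (z i.+1 - y) / (z i.+1 - z i)
            else if (j : nat) == i.+1 then (y - z i) / (z i.+1 - z i)
            else 0)
         else 0).

(* Pi_C (b_{c,gamma})_# acting (linearly) on a V-valued signed measure
   sum_i nu_i delta_{z_i} supported on the grid. *)
Definition pushproj (V : lmodType R) (N : nat) (zmin zmax gamma c : R)
    (nu : 'I_N -> V) : 'I_N -> V :=
  fun j => \sum_(i < N) @projC N zmin zmax (c + gamma * @zgrid N zmin zmax i) j *: nu i.

(* Composition Pi_C(b_{c_0})_# o ... o Pi_C(b_{c_{t-1}})_# for cs = [c_0; ...; c_{t-1}]. *)
Definition compB (V : lmodType R) (N : nat) (zmin zmax gamma : R) (cs : seq R)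
    (nu : 'I_N -> V) : 'I_N -> V :=
  foldr (fun c acc => pushproj zmin zmax gamma c acc) nu cs.

Definition grid_dist_family (S A : finType) (N : nat) (eta : S -> A -> 'I_N -> R) :=
  forall s a, (forall i, 0 <= eta s a i) /\ \sum_(i < N) eta s a i = 1.

(* eta is a fixed point of the projected distributional Bellman operator
   Pi_C T^pi (written out linearly on grid-supported measures). *)
Definition is_proj_bellman_fp (S A : finType) (N : nat) (zmin zmax gamma : R)
    (P : S -> A -> S -> R) (C : S -> A -> R) (pol : S -> A -> R)
    (eta : S -> A -> 'I_N -> R) :=
  forall s a j,
    eta s a j = \sum_(s' : S) P s a s' * \sum_(a' : A) pol s' a' *
        \sum_(i < N) eta s' a' i * @projC N zmin zmax (C s a + gamma * @zgrid N zmin zmax i) j.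

Definition unitv (d : nat) (k : 'I_d) : 'rV[R]_d := \row_l ((l == k)%:R).
Definition grad (d : nat) (f : 'rV[R]_d -> R) (x : 'rV[R]_d) : 'rV[R]_d :=
  \row_k ('D_(unitv k) f x).

Definition gN (S A : finType) (d N : nat) (pi : 'rV[R]_d -> S -> A -> R)
    (eta : S -> A -> 'I_N -> R) (th : 'rV[R]_d) (s : S) : 'I_N -> 'rV[R]_d :=
  fun j => \sum_(a : A) eta s a j *: grad (fun th' => pi th' s a) th.

(* E_tau[ B~_t g(s_t) ] for trajectories started at s (t = 0 gives g(s_0)):
   sum over finite prefixes (s_0,a_0,...,s_{t-1},a_{t-1},s_t) weighted by
   their probability 1[s_0 = s] prod_k pi(a_k|s_k) P(s_{k+1}|s_k,a_k). *)
Definition traj_term (S A : finType) (d N : nat) (zmin zmax gamma : R)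
    (P : S -> A -> S -> R) (C : S -> A -> R) (pol : S -> A -> R)
    (g : S -> 'I_N -> 'rV[R]_d) (s : S) (t : nat) : 'I_N -> 'rV[R]_d :=
  fun j => \sum_(ss : {ffun 'I_t.+1 -> S}) \sum_(acts : {ffun 'I_t -> A})
    (((ss ord0 == s)%:R *
      \prod_(k < t) (pol (ss (widen_ord (leqnSn t) k)) (acts k) *
                     P (ss (widen_ord (leqnSn t) k)) (acts k) (ss (lift ord0 k)))) *:
     compB zmin zmax gamma
       [seq C (ss (widen_ord (leqnSn t) k)) (acts k) | k <- enum 'I_t]
       (g (ss ord_max)) j).

End Defs.

From Pilot Require Import Defs.
From HB Require Import structures.
From mathcomp Require Import all_boot all_order all_algebra.
From mathcomp Require Import all_classical all_reals all_analysis.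
From mathcomp Require Import ring lra.
Set Implicit Arguments. Unset Strict Implicit. Unset Printing Implicit Defensive.
Import Order.TTheory GRing.Theory Num.Theory.
Import numFieldNormedType.Exports.
Local Open Scope classical_set_scope.
Local Open Scope ring_scope.

(* Write M for the projected Bellman operator acting on state-indexed signed
   measures on the grid, h |-> (s |-> sum_a pi(a|s) sum_s' P(s'|s,a)
   Pi_C (b_{C(s,a),gamma})_# h(s')).  The expected depth-t term of the
   trajectory sum is exactly M^t g_N.  Differentiating the fixed-point equation
   of eta_{N,oo} shows that U := grad eta_{N,oo}^s solves U = g_N + M U, hence
   U = sum_{t<m} M^t g_N + M^m U.  Each U(s) has total mass zero, and on such
   measures Pi_C (b_{c,gamma})_# is a gamma-contraction for the l1 norm of the
   CDF: it shifts and rescales the grid by gamma and then splits each atom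
   linearly between its two neighbours, so the CDF at z_{i+1} of the image is a
   combination of CDF values of the input whose weights, summed over i, are at
   most gamma.  Hence M^m U decays like gamma^m. *)

Lemma sum_ord_if_eq (V : nmodType) (k i : nat) (x : V) :
  \sum_(m < i.+1) (if (m : nat) == k then x else 0) = if (k <= i)%N then x else 0.
Proof. by rewrite -big_mkcond big_ord1_eq ltnS. Qed.

Section Clamp.
Variable R : realFieldType.

Definition clamp (m x : R) : R := if x <= 0 then 0 else if m <= x then m else x.

Local Ltac clamp_cases :=
  rewrite /clamp; repeat match goal with
  | |- context [if ?a <= ?b then _ else _] => case: (leP a b) => ?
  end; lra.

Lemma clamp_id m x : 0 <= x <= m -> clamp m x = x.
Proof. by case/andP=> *; clamp_cases. Qed.

Lemma clamp_le0 m x : x <= 0 -> clamp m x = 0.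
Proof. by move=> ?; clamp_cases. Qed.

Lemma clamp_ge m x : 0 <= m -> m <= x -> clamp m x = m.
Proof. by move=> *; clamp_cases. Qed.

Lemma ler_clamp m x y : 0 <= m -> x <= y -> clamp m x <= clamp m y.
Proof. by move=> *; clamp_cases. Qed.

Lemma clamp_subr_le m x y : 0 <= m -> x <= y -> clamp m y - clamp m x <= y - x.
Proof. by move=> *; clamp_cases. Qed.

Lemma sum_clamp1 n x : \sum_(i < n) clamp 1 (i.+1%:R - x) = clamp n%:R (n%:R - x).
Proof.
elim: n => [|n IH]; first by rewrite big_ord0 mulr0n; clamp_cases.
rewrite big_ord_recr /= IH -natr1.
have : 0 <= n%:R :> R by [].
by clamp_cases.
Qed.

End Clamp.

Section Grid.
Variables (R : realType) (n : nat) (zmin zmax : R).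
Hypotheses (n_gt0 : (0 < n)%N) (zmin_lt_zmax : zmin < zmax).

Local Notation z := (zgrid n.+1 zmin zmax).
Local Notation projC := (@projC R n.+1 zmin zmax).

Let step : R := (zmax - zmin) / n%:R.
(* Grid coordinate: [pos (z i) = i]. *)
Let pos (y : R) : R := (y - zmin) / step.

Lemma step_gt0 : 0 < step.
Proof. by rewrite divr_gt0 ?subr_gt0 ?ltr0n. Qed.

Lemma zgridE i : z i = zmin + i%:R * step.
Proof. by []. Qed.

Lemma pos_sub_zgrid y i : pos y - i%:R = (y - z i) / step.
Proof. by have := step_gt0; rewrite /pos zgridE => ?; field; lra. Qed.

Lemma ltr_zgrid_pos y i : (z i < y) = (i%:R < pos y).
Proof.
by rewrite -subr_gt0 -[RHS]subr_gt0 pos_sub_zgrid pmulr_lgt0 ?invr_gt0 ?step_gt0.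
Qed.

Lemma ler_pos_zgrid y i : (y <= z i) = (pos y <= i%:R).
Proof. by rewrite !leNgt ltr_zgrid_pos. Qed.

Lemma projC_lo y j : pos y <= 0 -> projC y j = if (j : nat) == 0%N then 1 else 0.
Proof. by move=> lo; rewrite /projC /= ler_pos_zgrid lo; case: eqP. Qed.

Lemma projC_hi y j : n%:R < pos y -> projC y j = if (j : nat) == n then 1 else 0.
Proof.
move=> hi; rewrite /projC /= ler_pos_zgrid ltr_zgrid_pos hi.
by rewrite leNgt (le_lt_trans _ hi) ?ler_nat //=; case: eqP.
Qed.

Lemma projC_mid y j k : (k < n)%N -> k%:R < pos y <= k.+1%:R ->
  projC y j = (if (j : nat) == k then k.+1%:R - pos y else 0)
            + (if (j : nat) == k.+1 then pos y - k%:R else 0).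
Proof.
move=> lt_kn /andP[lo hi]; rewrite /projC /=.
have pos_gt0 : 0%:R < pos y by apply: le_lt_trans lo; rewrite ler_nat.
have pos_le : pos y <= n%:R by apply: le_trans hi _; rewrite ler_nat.
rewrite (ler_pos_zgrid y 0) leNgt pos_gt0 ltr_zgrid_pos ltNge pos_le /=.
rewrite (bigD1 (Ordinal lt_kn)) //= ltr_zgrid_pos ler_pos_zgrid lo hi /=.
rewrite big1 ?addr0 => [|i /eqP ne_ik]; last first.
  rewrite ltr_zgrid_pos ler_pos_zgrid.
  case: (ltngtP i k) => [lt_ik|lt_ki|eq_ik]; last by case: ne_ik; apply: val_inj.
  - have : i.+1%:R < pos y by apply: le_lt_trans lo; rewrite ler_nat.
    by rewrite ltNge => /negbTE ->; rewrite andbF.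
  - have : pos y <= i%:R by apply: le_trans hi _; rewrite ler_nat.
    by rewrite leNgt => /negbTE ->.
have -> : z k.+1 - z k = step by rewrite !zgridE -natr1; ring.
rewrite -[z k.+1 - y]opprB mulNr -!pos_sub_zgrid opprB.
by case: eqP => [->|]; rewrite ?add0r // (ltn_eqF (ltnSn k)) addr0.
Qed.

Lemma pos_bracket y : 0 < pos y -> pos y <= n%:R ->
  exists2 k, (k < n)%N & k%:R < pos y <= k.+1%:R.
Proof.
move=> pos_gt0; suff: forall m, pos y <= m%:R ->
  exists2 k, (k < m)%N & k%:R < pos y <= k.+1%:R by apply.
elim=> [|m IH] le_m; first by move: (lt_le_trans pos_gt0 le_m); rewrite mulr0n ltxx.
case: (lerP (pos y) m%:R) => [/IH[k lt_km hk]|lt_m]; first by exists k => //; apply: ltnW.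
by exists m; rewrite ?lt_m.
Qed.

Lemma cdf_projC y i : (i < n)%N ->
  \sum_(m < i.+1) projC y (inord m) = clamp 1 (i.+1%:R - pos y).
Proof.
move=> lt_in.
have inordE (m : 'I_i.+1) : (inord m : 'I_n.+1) = m :> nat.
  by rewrite inordK // (leq_trans (ltn_ord m) (leqW lt_in)).
case: (lerP (pos y) 0) => [lo|pos_gt0].
  under eq_bigr => m _ do rewrite projC_lo // inordE.
  rewrite sum_ord_if_eq /= clamp_ge //.
  have : 1 <= i.+1%:R :> R by rewrite ler1n.
  lra.
case: (ltrP n%:R (pos y)) => [hi|le_n].
  under eq_bigr => m _ do rewrite projC_hi // inordE.
  rewrite sum_ord_if_eq leqNgt lt_in /= clamp_le0 //.
  have : i.+1%:R <= n%:R :> R by rewrite ler_nat.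
  lra.
have [k lt_kn hk] := pos_bracket pos_gt0 le_n.
under eq_bigr => m _ do rewrite (projC_mid _ lt_kn hk) inordE.
rewrite big_split /= !sum_ord_if_eq; move: hk => /andP[lo hi].
case: (ltngtP k i) => [lt_ki|lt_ik|<-].
- rewrite clamp_ge //; last first.
    have : k.+2%:R <= i.+1%:R :> R by rewrite ler_nat.
    by rewrite -!natr1 in hi *; lra.
  by rewrite -natr1; ring.
- rewrite addr0 clamp_le0 //.
  have : i.+1%:R <= k%:R :> R by rewrite ler_nat.
  lra.
- rewrite addr0 clamp_id //.
  by rewrite -!natr1 in hi *; apply/andP; split; lra.
Qed.

Lemma projC_mass y : \sum_j projC y j = 1.
Proof.
case: (lerP (pos y) 0) => [lo|pos_gt0].
  by under eq_bigr do rewrite projC_lo //; rewrite sum_ord_if_eq.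
case: (ltrP n%:R (pos y)) => [hi|le_n].
  by under eq_bigr do rewrite projC_hi //; rewrite sum_ord_if_eq leqnn.
have [k lt_kn hk] := pos_bracket pos_gt0 le_n.
under eq_bigr do rewrite (projC_mid _ lt_kn hk).
by rewrite big_split /= !sum_ord_if_eq (ltnW lt_kn) lt_kn -natr1; ring.
Qed.

Variables (V : normedModType R) (gamma : R).
Hypothesis gamma_ge0 : 0 <= gamma.

Local Notation pushproj c := (@pushproj R V n.+1 zmin zmax gamma c).

Definition cdf (nu : 'I_n.+1 -> V) t := \sum_(m < t) nu (inord m).

Definition cdf_norm (nu : 'I_n.+1 -> V) := \sum_(i < n) `|cdf nu i.+1|.

Lemma cdf_norm_ge0 nu : 0 <= cdf_norm nu.
Proof. exact: sumr_ge0. Qed.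

Lemma cdf_total nu : cdf nu n.+1 = \sum_j nu j.
Proof. by apply: eq_bigr => j _; rewrite inord_val. Qed.

Lemma cdf_le_cdf_norm nu t : \sum_j nu j = 0 -> (t <= n.+1)%N ->
  `|cdf nu t| <= cdf_norm nu.
Proof.
move=> mass0; case: t => [|t] le_tn; first by rewrite /cdf big_ord0 normr0 cdf_norm_ge0.
case: (ltnP t n) => [lt_tn|le_nt].
  by rewrite /cdf_norm (bigD1 (Ordinal lt_tn)) //= lerDl sumr_ge0.
have -> : t = n by apply/eqP; rewrite eqn_leq le_nt -ltnS le_tn.
by rewrite cdf_total mass0 normr0 cdf_norm_ge0.
Qed.

Lemma norm_le_cdf_norm nu j : \sum_j nu j = 0 -> `|nu j| <= 2 * cdf_norm nu.
Proof.
move=> mass0; have -> : nu j = cdf nu j.+1 - cdf nu j.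
  by rewrite /cdf big_ord_recr /= inord_val addrAC subrr add0r.
rewrite mulr2n mulrDl mul1r (le_trans (ler_normB _ _)) // lerD //.
  exact: cdf_le_cdf_norm.
by apply: cdf_le_cdf_norm => //; apply: ltnW.
Qed.

Lemma cdf_norm_sum (I : finType) (w : I -> R) (F : I -> 'I_n.+1 -> V) :
  cdf_norm (fun j => \sum_x w x *: F x j) <= \sum_x `|w x| * cdf_norm (F x).
Proof.
have cdfE t : cdf (fun j => \sum_x w x *: F x j) t = \sum_x w x *: cdf (F x) t.
  by rewrite /cdf exchange_big; apply: eq_bigr => x _; rewrite scaler_sumr.
rewrite /cdf_norm; under eq_bigr do rewrite cdfE.
apply: le_trans (ler_sum _ (fun i _ => ler_norm_sum _ _ _)) _.
rewrite exchange_big /=; apply: ler_sum => x _.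
by rewrite mulr_sumr; apply: ler_sum => i _; rewrite normrZ.
Qed.

Lemma pushproj_mass c nu : \sum_j pushproj c nu j = \sum_j nu j.
Proof.
rewrite /Defs.pushproj exchange_big /=; apply: eq_bigr => i _.
by rewrite -scaler_suml projC_mass scale1r.
Qed.

Lemma sum_by_parts (a : nat -> R) (nu : nat -> V) k :
  \sum_(l < k.+1) a l *: nu l =
  \sum_(l < k) (a l - a l.+1) *: \sum_(m < l.+1) nu m + a k *: \sum_(m < k.+1) nu m.
Proof.
elim: k => [|k IH]; first by rewrite big_ord0 add0r !big_ord1.
rewrite big_ord_recr /= IH [in RHS]big_ord_recr /= [\sum_(m < k.+2) _]big_ord_recr /=.
by rewrite scalerBl scalerDr -!addrA addKr.
Qed.

Lemma cdf_pushproj c nu i : (i < n)%N ->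
  cdf (pushproj c nu) i.+1 =
  \sum_(l < n.+1) clamp 1 (i.+1%:R - pos (c + gamma * z l)) *: nu (inord l).
Proof.
move=> lt_in; rewrite /cdf /Defs.pushproj exchange_big /=; apply: eq_bigr => l _.
by rewrite -scaler_suml cdf_projC // inord_val.
Qed.

Lemma pos_push_zgridS c l :
  pos (c + gamma * z l.+1) - pos (c + gamma * z l) = gamma.
Proof. by have := step_gt0; rewrite /pos !zgridE -natr1 => ?; field; lra. Qed.

Lemma pushproj_contract c nu : \sum_j nu j = 0 ->
  cdf_norm (pushproj c nu) <= gamma * cdf_norm nu.
Proof.
move=> mass0.
pose u l := pos (c + gamma * z l).
have u_step l : u l.+1 - u l = gamma by exact: pos_push_zgridS.
pose F i l := clamp 1 (i.+1%:R - u l).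
have F_dec i l : 0 <= F i l - F i l.+1.
  by rewrite subr_ge0 ler_clamp // lerD2l lerN2 -subr_ge0 u_step.
have cdf_bound (i : 'I_n) :
    `|cdf (pushproj c nu) i.+1| <= \sum_(l < n) (F i l - F i l.+1) * `|cdf nu l.+1|.
  rewrite cdf_pushproj // (sum_by_parts (F i) (fun l => nu (inord l))).
  rewrite -/(cdf nu n.+1) cdf_total mass0 scaler0 addr0.
  apply: le_trans (ler_norm_sum _ _ _) _; apply: ler_sum => l _.
  by rewrite normrZ ger0_norm.
apply: le_trans (ler_sum _ (fun i _ => cdf_bound i)) _.
rewrite /cdf_norm exchange_big /= mulr_sumr; apply: ler_sum => l _.
rewrite -mulr_suml; apply: ler_wpM2r => //.
have le_u : n%:R - u l.+1 <= n%:R - u l by rewrite lerD2l lerN2 -subr_ge0 u_step.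
rewrite sumrB /F !sum_clamp1 -(u_step l).
by apply: le_trans (clamp_subr_le (ler0n _ n) le_u) _; rewrite opprB addrC addrA subrK.
Qed.

End Grid.

Lemma cvg_geometric_bound (R : realType) (V : normedModType R) (u : nat -> V)
    (x : V) (K q : R) :
  0 <= q < 1 -> (forall m, `|x - u m| <= K * q ^+ m) -> u @ \oo --> x.
Proof.
move=> /andP[q_ge0 q_lt1] bound.
have : geometric K q @ \oo --> 0 by apply: cvg_geometric; rewrite ger0_norm.
move=> /cvgr0_norm_le geo0; apply/cvgrPdist_le => e e_gt0.
near=> m; apply: le_trans (bound m) (le_trans (ler_norm _) _).
by near: m; exact: geo0.
Unshelve. all: by end_near.
Qed.

Lemma convex_comb_le (R : numDomainType) (I : finType) (w : I -> R) (x : I -> R) B :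
  (forall i, 0 <= w i) -> \sum_i w i = 1 -> (forall i, x i <= B) ->
  \sum_i `|w i| * x i <= B.
Proof.
move=> w_ge0 w_sum x_le; rewrite -[B]mul1r -w_sum mulr_suml.
by apply: ler_sum => i _; rewrite ger0_norm // ler_wpM2l.
Qed.

Section ProjBellman.
Variables (R : realType) (zmin zmax gamma : R) (S A : finType)
  (P : S -> A -> S -> R) (C : S -> A -> R) (pol : S -> A -> R).

Definition proj_bellman (N : nat) (V : lmodType R) (h : S -> 'I_N -> V) : S -> 'I_N -> V :=
  fun s j => \sum_a pol s a *: \sum_s' P s a s' *:
               pushproj zmin zmax gamma (C s a) (h s') j.

Section Linear.
Variables (N : nat) (V : lmodType R).
Local Notation M := (@proj_bellman N V).
Local Notation pushproj c := (@pushproj R V N zmin zmax gamma c).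

Lemma pushproj_sum c (I : finType) (F : I -> 'I_N -> V) j :
  pushproj c (fun j' => \sum_x F x j') j = \sum_x pushproj c (F x) j.
Proof.
by rewrite /Defs.pushproj exchange_big; apply: eq_bigr => i _; rewrite scaler_sumr.
Qed.

Lemma pushprojZ c w (nu : 'I_N -> V) j :
  pushproj c (fun j' => w *: nu j') j = w *: pushproj c nu j.
Proof.
by rewrite /Defs.pushproj scaler_sumr; apply: eq_bigr => i _; rewrite !scalerA mulrC.
Qed.

Lemma proj_bellmanD (h1 h2 : S -> 'I_N -> V) s j :
  M (fun s j => h1 s j + h2 s j) s j = M h1 s j + M h2 s j.
Proof.
rewrite /proj_bellman -big_split /=; apply: eq_bigr => a _; rewrite -scalerDr -big_split /=.
congr (_ *: _); apply: eq_bigr => s' _; rewrite -scalerDr; congr (_ *: _).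
by rewrite /Defs.pushproj -big_split /=; apply: eq_bigr => i _; rewrite scalerDr.
Qed.

Lemma iter_proj_bellmanD t (h1 h2 : S -> 'I_N -> V) s j :
  iter t M (fun s j => h1 s j + h2 s j) s j = iter t M h1 s j + iter t M h2 s j.
Proof.
elim: t s j => [|t IH] s j //=.
rewrite -proj_bellmanD; congr (M _ s j).
by apply/funext => s'; apply/funext => j'; apply: IH.
Qed.

Lemma proj_bellman_unroll (G U : S -> 'I_N -> V) :
  (forall s j, U s j = G s j + M U s j) ->
  forall m s j, U s j = \sum_(t < m) iter t M G s j + iter m M U s j.
Proof.
move=> U_fix; elim=> [|m IH] s j; first by rewrite big_ord0 add0r.
rewrite IH big_ord_recr -addrA; congr (_ + _).
rewrite iterSr -iter_proj_bellmanD; congr (iter m M _ s j).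
by apply/funext => s'; apply/funext => j'; apply: U_fix.
Qed.

End Linear.

Section Contraction.
Variable n : nat.
Hypotheses (n_gt0 : (0 < n)%N) (zmin_lt_zmax : zmin < zmax).
Hypotheses (gamma_ge0 : 0 <= gamma) (gamma_lt1 : gamma < 1).
Hypothesis P_dist : forall s a, (forall s', 0 <= P s a s') /\ \sum_s' P s a s' = 1.
Hypothesis pol_dist : forall s, (forall a, 0 <= pol s a) /\ \sum_a pol s a = 1.
Variable V : normedModType R.
Local Notation M := (@proj_bellman n.+1 V).
Local Notation cdf_norm := (@cdf_norm R n V).
Local Notation mass0 h := (forall s, \sum_j h s j = 0).

Lemma proj_bellman_mass0 (h : S -> 'I_n.+1 -> V) : mass0 h -> mass0 (M h).
Proof.
move=> h0 s; rewrite /proj_bellman exchange_big big1 // => a _.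
rewrite -scaler_sumr exchange_big big1 ?scaler0 // => s' _.
by rewrite -scaler_sumr pushproj_mass // h0 scaler0.
Qed.

Lemma proj_bellman_contract (h : S -> 'I_n.+1 -> V) B : mass0 h ->
  (forall s, cdf_norm (h s) <= B) -> forall s, cdf_norm (M h s) <= gamma * B.
Proof.
move=> h0 h_le s; rewrite /proj_bellman.
apply: le_trans (cdf_norm_sum (pol s) (fun a j =>
  \sum_s' P s a s' *: pushproj zmin zmax gamma (C s a) (h s') j)) _.
apply: convex_comb_le => [a||a]; rewrite ?(pol_dist s).2 ?(pol_dist s).1 //.
apply: le_trans (cdf_norm_sum (P s a) (fun s' =>
  pushproj zmin zmax gamma (C s a) (h s'))) _.
apply: convex_comb_le => [s'||s']; rewrite ?(P_dist s a).2 ?(P_dist s a).1 //.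
apply: le_trans (pushproj_contract n_gt0 zmin_lt_zmax gamma_ge0 _ (h0 s')) _.
exact: ler_wpM2l.
Qed.

Lemma iter_proj_bellman_mass0 (h : S -> 'I_n.+1 -> V) t : mass0 h -> mass0 (iter t M h).
Proof. by move=> h0; elim: t => //= t; apply: proj_bellman_mass0. Qed.

Lemma cdf_norm_iter_proj_bellman (h : S -> 'I_n.+1 -> V) t s : mass0 h ->
  cdf_norm (iter t M h s) <= gamma ^+ t * \sum_s' cdf_norm (h s').
Proof.
move=> h0; elim: t s => [|t IH] s /=.
  by rewrite mul1r (bigD1 s) //= lerDl sumr_ge0 // => s' _; apply: cdf_norm_ge0.
rewrite exprS -mulrA; apply: proj_bellman_contract => //.
exact: iter_proj_bellman_mass0.
Qed.

Lemma cvg_proj_bellman_series (G U : S -> 'I_n.+1 -> V) s j :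
  mass0 U -> (forall s j, U s j = G s j + M U s j) ->
  (fun m => \sum_(t < m) iter t M G s j) @ \oo --> U s j.
Proof.
move=> U0 U_fix; apply: (@cvg_geometric_bound _ _ _ _ (2 * \sum_s' cdf_norm (U s')) gamma).
  by rewrite gamma_ge0 gamma_lt1.
move=> m; rewrite {1}(proj_bellman_unroll U_fix m s j) addrC addKr.
apply: le_trans (norm_le_cdf_norm j (iter_proj_bellman_mass0 m U0 s)) _.
rewrite -mulrA; apply: ler_wpM2l => //; rewrite mulrC.
exact: cdf_norm_iter_proj_bellman.
Qed.

End Contraction.
End ProjBellman.

Arguments proj_bellman {R} zmin zmax gamma {S A} P C pol {N V} h s j.

Definition fcons (T : Type) (m : nat) (x : T) (f : {ffun 'I_m -> T}) :
    {ffun 'I_m.+1 -> T} :=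
  [ffun i => if unlift ord0 i is Some i' then f i' else x].

Lemma fcons0 (T : Type) m x (f : {ffun 'I_m -> T}) : fcons x f ord0 = x.
Proof. by rewrite ffunE unlift_none. Qed.

Lemma fconsS (T : Type) m x (f : {ffun 'I_m -> T}) i : fcons x f (lift ord0 i) = f i.
Proof. by rewrite ffunE liftK. Qed.

Lemma big_fcons (T : finType) (V : nmodType) m (F : {ffun 'I_m.+1 -> T} -> V) :
  \sum_ff F ff = \sum_x \sum_(f : {ffun 'I_m -> T}) F (fcons x f).
Proof.
rewrite pair_big /= (reindex (fun p : T * {ffun 'I_m -> T} => fcons p.1 p.2)) //.
exists (fun ff : {ffun 'I_m.+1 -> T} => (ff ord0, [ffun i => ff (lift ord0 i)])).
  by move=> [x f] _ /=; rewrite fcons0; congr pair; apply/ffunP => i; rewrite ffunE fconsS.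
move=> ff _; apply/ffunP => i; rewrite ffunE.
by case: unliftP => [j ->|->]; rewrite ?ffunE.
Qed.

Section Trajectories.
Variables (R : realType) (N d : nat) (zmin zmax gamma : R) (S A : finType)
  (P : S -> A -> S -> R) (C : S -> A -> R) (pol : S -> A -> R).
Variable g : S -> 'I_N -> 'rV[R]_d.

Local Notation M := (proj_bellman zmin zmax gamma P C pol).
Local Notation traj_term := (traj_term zmin zmax gamma P C pol g).
Local Notation widen t k := (widen_ord (leqnSn t) k).

Lemma prod_fcons t x (f : {ffun 'I_t.+1 -> S}) a (acts : {ffun 'I_t -> A}) :
  \prod_(k < t.+1) (pol (fcons x f (widen t.+1 k)) (fcons a acts k) *
     P (fcons x f (widen t.+1 k)) (fcons a acts k) (fcons x f (lift ord0 k)))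
  = (pol x a * P x a (f ord0)) *
      \prod_(k < t) (pol (f (widen t k)) (acts k) *
                   P (f (widen t k)) (acts k) (f (lift ord0 k))).
Proof.
rewrite big_ord_recl; have -> : widen t.+1 ord0 = ord0 by exact: val_inj.
rewrite !fcons0 fconsS; congr (_ * _); apply: eq_bigr => k _.
have -> : widen t.+1 (lift ord0 k) = lift ord0 (widen t k) by exact: val_inj.
by rewrite !fconsS.
Qed.

Lemma costs_fcons t x (f : {ffun 'I_t.+1 -> S}) a (acts : {ffun 'I_t -> A}) :
  [seq C (fcons x f (widen t.+1 k)) (fcons a acts k) | k <- enum 'I_t.+1] =
  C x a :: [seq C (f (widen t k)) (acts k) | k <- enum 'I_t].
Proof.
rewrite enum_ordSl /=; have -> : widen t.+1 ord0 = ord0 by exact: val_inj.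
rewrite !fcons0; congr cons; rewrite -map_comp; apply: eq_map => k /=.
have -> : widen t.+1 (lift ord0 k) = lift ord0 (widen t k) by exact: val_inj.
by rewrite !fconsS.
Qed.

Lemma traj_term0 s j : traj_term s 0 j = g s j.
Proof.
rewrite /Defs.traj_term big_fcons (bigD1 s) //= [X in _ + X]big1 ?addr0
  => [|x ne_xs]; last first.
  by apply: big1 => f _; apply: big1 => acts _; rewrite fcons0 (negbTE ne_xs) mul0r scale0r.
have -> : (ord_max : 'I_1) = ord0 by exact: val_inj.
under eq_bigr => f _ do under eq_bigr => acts _ do
  rewrite fcons0 eqxx big_ord0 mulr1 scale1r enum_ord0 /=.
by rewrite !sumr_const !card_ffun !card_ord !expn0 !mulr1n.
Qed.

Lemma traj_termS s t j : traj_term s t.+1 j = M (fun s' => traj_term s' t) s j.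
Proof.
rewrite /Defs.traj_term big_fcons (bigD1 s) //= [X in _ + X]big1 ?addr0
  => [|x ne_xs]; last first.
  apply: big1 => f _; rewrite big_fcons; apply: big1 => a _.
  by apply: big1 => acts _; rewrite fcons0 (negbTE ne_xs) mul0r scale0r.
have -> : (ord_max : 'I_t.+2) = lift ord0 (ord_max : 'I_t.+1) by exact: val_inj.
under eq_bigr => f _ do rewrite big_fcons.
rewrite exchange_big /= /proj_bellman; apply: eq_bigr => a _.
under eq_bigr => f _ do under eq_bigr => acts _ do
  rewrite fcons0 eqxx mul1r prod_fcons costs_fcons fconsS /=.
under [in RHS]eq_bigr => s' _ do rewrite pushproj_sum.
under [in RHS]eq_bigr => s' _ do under eq_bigr => f _ do rewrite pushproj_sum.
under [in RHS]eq_bigr => s' _ do under eq_bigr => f _ do under eq_bigr => acts _ do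
  rewrite pushprojZ.
under [in RHS]eq_bigr => s' _ do rewrite scaler_sumr.
rewrite [in RHS]exchange_big /= [in RHS]scaler_sumr; apply: eq_bigr => f _.
under [in RHS]eq_bigr => s' _ do rewrite scaler_sumr.
rewrite [in RHS]exchange_big /= [in RHS]scaler_sumr; apply: eq_bigr => acts _.
rewrite (bigD1 (f ord0)) //= eqxx mul1r [X in _ + X]big1 ?addr0 => [|s' ne_s'f]; last first.
  by rewrite eq_sym (negbTE ne_s'f) mul0r scale0r scaler0.
by rewrite !scalerA.
Qed.

Lemma traj_termE t s j : traj_term s t j = iter t M g s j.
Proof.
elim: t s j => [|t IH] s j; first exact: traj_term0.
rewrite traj_termS /=; suff -> : (fun s' => traj_term s' t) = iter t M g by [].
by apply/funext => s'; apply/funext => j'; apply: IH.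
Qed.

End Trajectories.

Lemma proj_bellman_mxE (R : realType) (zmin zmax gamma : R) (S A : finType)
    (P : S -> A -> S -> R) (C : S -> A -> R) (pol : S -> A -> R) (N m l : nat)
    (h : S -> 'I_N -> 'M[R]_(m, l)) s j i k :
  proj_bellman zmin zmax gamma P C pol h s j i k =
  proj_bellman zmin zmax gamma P C pol (fun s j => h s j i k) s j.
Proof.
rewrite /proj_bellman /Defs.pushproj summxE; apply: eq_bigr => a _.
rewrite mxE summxE; congr (_ * _); apply: eq_bigr => s' _.
rewrite mxE summxE; congr (_ * _); apply: eq_bigr => i' _.
by rewrite mxE.
Qed.

Section DirectionalCalculus.
Variables (R : realType) (U : normedModType R).

Lemma is_derive_val (f : U -> R) x v df : is_derive x v f df -> 'D_v f x = df.
Proof. by case. Qed.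

Lemma is_derive_finsum (I : finType) (h : I -> U -> R) x v (dh : I -> R) :
  (forall i, is_derive x v (h i) (dh i)) ->
  is_derive x v (fun y => \sum_i h i y) (\sum_i dh i).
Proof.
move=> dh_h; rewrite -fct_sumE.
by elim/big_ind2 : _ => // [|f df g dg *]; [exact: is_derive_cst | exact: is_deriveD].
Qed.

Lemma is_derive_mul (f g : U -> R) x v df dg :
  is_derive x v f df -> is_derive x v g dg ->
  is_derive x v (fun y => f y * g y) (f x * dg + g x * df).
Proof. exact: is_deriveM. Qed.

Lemma is_derive_mull (f : U -> R) c x v df :
  is_derive x v f df -> is_derive x v (fun y => c * f y) (c * df).
Proof. exact: is_deriveZ. Qed.

Lemma is_derive_mulr (f : U -> R) c x v df :
  is_derive x v f df -> is_derive x v (fun y => f y * c) (df * c).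
Proof.
move=> df_f; rewrite mulrC; under [fun y => _]funext => y do rewrite mulrC.
exact: is_deriveZ.
Qed.

End DirectionalCalculus.

Section GradientBellman.
Variables (R : realType) (d N : nat) (zmin zmax gamma : R) (S A : finType)
  (P : S -> A -> S -> R) (C : S -> A -> R)
  (pi : 'rV[R]_d -> S -> A -> R) (p : 'rV[R]_d -> S -> A -> 'I_N -> R).
Hypothesis pi_dist : forall th s, (forall a, 0 <= pi th s a) /\ \sum_a pi th s a = 1.
Hypothesis pi_diff : forall s a th, differentiable (fun th' => pi th' s a) th.
Hypothesis p_fp : forall th, grid_dist_family (p th) /\
  is_proj_bellman_fp zmin zmax gamma P C (pi th) (p th).
Hypothesis p_diff : forall s a i th, differentiable (fun th' => p th' s a i) th.
Variable th : 'rV[R]_d.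

Local Notation value s j := (fun th' => \sum_a pi th' s a * p th' s a j).
Local Notation M := (proj_bellman zmin zmax gamma P C (pi th)).
Local Notation proj s a i := (@projC R N zmin zmax (C s a + gamma * zgrid N zmin zmax i)).

Section Direction.
Variable v : 'rV[R]_d.

Let dpi s a := 'D_v (fun th' => pi th' s a) th.
Let dp s a j := 'D_v (fun th' => p th' s a j) th.
Let dvalue s j := 'D_v (value s j) th.

Lemma is_derive_pi s a : is_derive th v (fun th' => pi th' s a) (dpi s a).
Proof. exact/derivableP/diff_derivable. Qed.

Lemma is_derive_p s a j : is_derive th v (fun th' => p th' s a j) (dp s a j).
Proof. exact/derivableP/diff_derivable. Qed.

Lemma dvalueE s j : dvalue s j = \sum_a (pi th s a * dp s a j + p th s a j * dpi s a).
Proof.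
apply: is_derive_val; apply: is_derive_finsum => a.
exact: is_derive_mul (is_derive_pi s a) (is_derive_p s a j).
Qed.

Lemma dpE s a j : dp s a j = \sum_s' P s a s' * \sum_a'
  (pi th s' a' * \sum_i dp s' a' i * proj s a i j
   + (\sum_i p th s' a' i * proj s a i j) * dpi s' a').
Proof.
rewrite {1}/dp; have -> : (fun th' => p th' s a j) =
    fun th' => \sum_s' P s a s' * \sum_a' pi th' s' a' * \sum_i p th' s' a' i * proj s a i j.
  by apply/funext => th'; rewrite ((p_fp th').2 s a j).
apply: is_derive_val; apply: is_derive_finsum => s'; apply: is_derive_mull.
apply: is_derive_finsum => a'; apply: is_derive_mul; first exact: is_derive_pi.
by apply: is_derive_finsum => i; apply: is_derive_mulr; exact: is_derive_p.
Qed.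

Lemma dvalue_bellman s j :
  dvalue s j = \sum_a p th s a j * dpi s a + M dvalue s j.
Proof.
rewrite dvalueE /proj_bellman big_split /= addrC; congr (_ + _).
apply: eq_bigr => a _; congr (_ * _).
rewrite dpE; apply: eq_bigr => s' _; congr (_ * _).
rewrite /Defs.pushproj.
under [RHS]eq_bigr => i _ do rewrite dvalueE scaler_sumr.
rewrite [RHS]exchange_big /=; apply: eq_bigr => a' _.
rewrite mulr_sumr mulr_suml -big_split /=; apply: eq_bigr => i _.
rewrite /GRing.scale /=; ring.
Qed.

Lemma dvalue_mass0 s : \sum_j dvalue s j = 0.
Proof.
have sum1 : (fun th' => \sum_j \sum_a pi th' s a * p th' s a j) = cst 1.
  apply/funext => th'; rewrite /= exchange_big /= -(pi_dist th' s).2.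
  by apply: eq_bigr => a _; rewrite -mulr_sumr ((p_fp th').1 s a).2 mulr1.
rewrite -[RHS](derive_cst (1 : R) th v) -sum1; under eq_bigr do rewrite dvalueE.
apply/esym/is_derive_val/is_derive_finsum => j; apply: is_derive_finsum => a.
exact: is_derive_mul (is_derive_pi s a) (is_derive_p s a j).
Qed.

End Direction.

Lemma grad_value_bellman s j :
  grad (value s j) th = gN pi (p th) th s j + M (fun s j => grad (value s j) th) s j.
Proof.
apply/rowP => k; rewrite [LHS]mxE mxE proj_bellman_mxE summxE.
have -> : (fun s j => grad (value s j) th 0 k) =
    fun s j => 'D_(@unitv R d k) (value s j) th.
  by apply/funext => s'; apply/funext => j'; rewrite mxE.
rewrite dvalue_bellman; congr (_ + _); apply: eq_bigr => a _.
by rewrite !mxE.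
Qed.

Lemma grad_value_mass0 s : \sum_j grad (value s j) th = 0.
Proof.
apply/rowP => k; rewrite summxE mxE; under eq_bigr do rewrite mxE.
exact: dvalue_mass0.
Qed.

End GradientBellman.

Theorem theorem4 (R : realType) (S A : finType) (d N : nat) (zmin zmax gamma : R)
    (P : S -> A -> S -> R) (C : S -> A -> R)
    (pi : 'rV[R]_d -> S -> A -> R) (p : 'rV[R]_d -> S -> A -> 'I_N -> R) :
  (2 <= N)%N -> zmin < zmax -> 0 <= gamma -> gamma < 1 ->
  (forall s a, (forall s', 0 <= P s a s') /\ \sum_(s' : S) P s a s' = 1) ->
  (forall th s, (forall a, 0 <= pi th s a) /\ \sum_(a : A) pi th s a = 1) ->
  (forall s a th, differentiable (fun th' => pi th' s a) th) ->
  (forall th, grid_dist_family (p th) /\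
              is_proj_bellman_fp zmin zmax gamma P C (pi th) (p th)) ->
  (forall s a i th, differentiable (fun th' => p th' s a i) th) ->
  forall (th : 'rV[R]_d) (s : S) (j : 'I_N),
    (fun n : nat => \sum_(0 <= t < n)
        traj_term zmin zmax gamma P C (pi th) (gN pi (p th) th) s t j)
      @ \oo --> grad (fun th' => \sum_(a : A) pi th' s a * p th' s a j) th.
Proof.
move=> N_ge2 zmin_lt_zmax gamma_ge0 gamma_lt1 P_dist pi_dist pi_diff p_fp p_diff th s j.
case: N p j N_ge2 p_fp p_diff => [|[|n]] // p j _ p_fp p_diff.
rewrite (_ : (fun m : nat => _) = fun m => \sum_(t < m)
    iter t (proj_bellman zmin zmax gamma P C (pi th)) (gN pi (p th) th) s j); last first.
  by apply/funext => m; rewrite big_mkord; apply: eq_bigr => t _; rewrite traj_termE.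
exact: (cvg_proj_bellman_series _ zmin_lt_zmax gamma_ge0 gamma_lt1 P_dist (pi_dist th)
  (grad_value_mass0 pi_dist pi_diff p_fp p_diff th)
  (grad_value_bellman pi_diff p_fp p_diff th)).
Qed.
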